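(* Let $m\ge 2$ and let $e_1=(1,0)$, $e_2=(0,1)$ be the standard generating set of $\mathbb{Z}\times\mathbb{Z}_m$. Then the Cayley digraph $\mathrm{Cay}(\mathbb{Z}\times\mathbb{Z}_m;e_1,e_2)$ has a two-way infinite hamiltonian path, and it is unique up to translations.
   Context: The Cayley digraph $\mathrm{Cay}(G;a,b)$ has vertex set $G$ and an arc from $v$ to $v+s$ for all $v\in G$, $s\in\{a,b\}$. A two-way infinite hamiltonian path is a doubly-infinite sequence $\ldots,v_{-1},v_0,v_1,\ldots$ listing every vertex exactly once with an arc from $v_i$ to $v_{i+1}$ for all $i\in\mathbb{Z}$. A translate of a path by $g\in G$ is obtained by adding $g$ to every vertex. *)

From mathcomp Require Import all_boot all_order all_algebra.
Set Implicit Arguments. Unset Strict Implicit. Unset Printing Implicit Defensive.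
Import GRing.Theory.
Local Open Scope ring_scope.

Definition cay_arc (G : zmodType) (a b : G) (u v : G) : Prop :=
  v = u + a \/ v = u + b.

Definition two_way_ham_path (G : zmodType) (a b : G) (p : int -> G) : Prop :=
  bijective p /\ forall i : int, cay_arc a b (p i) (p (i + 1)).

(* Two paths are the same up to translation: q is the translate of p by
   some g in G (up to the irrelevant choice of index origin). *)
Definition translate_equiv (G : zmodType) (p q : int -> G) : Prop :=
  exists (k : int) (g : G), forall i : int, q i = p (i + k) + g.

Definition ZZm (m : nat) : zmodType := (int * 'Z_m)%type.
Definition e1 (m : nat) : ZZm m := (1%:Z, 0).
Definition e2 (m : nat) : ZZm m := (0%:Z, 1).

(* The step taken out of a vertex of a hamiltonian path in Cay(G; a, b) depends only on the
   coset of the vertex modulo <b - a>.  In Z x Z_m these cosets are the fibres of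
   (x, y) |-> x + y in Z_m, and this sum increases by one along the path, so the steps are
   m-periodic.  Some class of vertices steps by e1, since otherwise the first coordinate
   would be constant.  If two classes stepped by e1, the first coordinate would grow by two
   over m consecutive steps, and the vertex p_i + e1 - e2 (same class as p_i, first
   coordinate one larger) would have to be visited less than m steps after p_i, in another
   class.  So exactly one class steps by e1, which determines the path up to translation. *)

From mathcomp Require Import all_boot all_order all_algebra zify ring.
From Stdlib Require Import Classical.
Set Implicit Arguments. Unset Strict Implicit. Unset Printing Implicit Defensive.
Import Order.TTheory GRing.Theory Num.Theory.
Local Open Scope ring_scope.

Lemma int_shift_ind (P : int -> Prop) :
  P 0 -> (forall n, P n <-> P (n + 1)) -> forall n, P n.
Proof.
move=> P0 PS; elim/int_rect => [//|n Pn|n Pn].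
- by rewrite -addn1 PoszD; apply: (PS _).1.
- by apply: (PS _).2; rewrite -addn1 PoszD opprD addrNK.
Qed.

Lemma homo_lez (f : int -> int) :
  (forall i, f i <= f (i + 1)) -> {homo f : i j / i <= j}.
Proof.
move=> fS i j; rewrite -subr_ge0 => /gez0_abs ji; rewrite -(subrKC i j) -ji.
elim: `|j - i|%N => [|n IH]; first by rewrite addr0.
by rewrite -addn1 PoszD addrA; apply: le_trans IH (fS _).
Qed.

Definition step (G : zmodType) (p : int -> G) (i : int) : G := p (i + 1) - p i.

Lemma stepK (G : zmodType) (p : int -> G) i : p (i + 1) = p i + step p i.
Proof. by rewrite /step subrKC. Qed.

Lemma step_translate (G : zmodType) (p q : int -> G) (k : int) :
  (forall i, step q i = step p (i + k)) ->
  forall i, q i = p (i + k) + (q 0 - p k).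
Proof.
move=> qp; apply: int_shift_ind => [|i]; first by rewrite add0r addrC subrK.
rewrite (addrAC i 1 k) !stepK qp addrAC.
by split=> [-> //|]; apply: addIr.
Qed.

Section CayleyHamPath.
Variables (G : zmodType) (a b : G) (p : int -> G).
Hypothesis p_ham : two_way_ham_path a b p.

Lemma step_cases i : step p i = a \/ step p i = b.
Proof.
by rewrite /step; case: p_ham => _ /(_ i) [] ->; rewrite addrC addKr; [left|right].
Qed.

(* If p_i steps by a and p_i + (b - a) by b, then p_i + b has no predecessor; in the
   opposite case both step into p_i + b. *)
Lemma step_coset1 i j : p j = p i + (b - a) -> step p j = step p i.
Proof.
have [[pinv pK pinvK] _] := p_ham; have p_inj := can_inj pK.
move=> pj; case: (step_cases i) => si; case: (step_cases j) => sj; rewrite si sj //.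
- pose l := pinv (p i + b).
  have pl : p (l - 1) + step p (l - 1) = p i + b by rewrite -stepK subrK pinvK.
  case: (step_cases (l - 1)) => sl; rewrite sl in pl.
  + have jl : j = l - 1 by apply: p_inj; rewrite pj addrA -(canRL (addrK a) pl).
    by rewrite -sj -sl jl.
  + have il : i = l - 1 by apply: p_inj; rewrite (canRL (addrK b) pl) addrK.
    by rewrite -si -sl il.
- have ij : i = j by apply: (addIr 1); apply: p_inj; rewrite !stepK si sj pj -addrA subrK.
  by move: pj; rewrite ij -{1}[p j]addr0 => /addrI/esym/subr0_eq ->.
Qed.

Lemma step_coset i j k : p j = p i + (b - a) *~ k -> step p j = step p i.
Proof.
have [[pinv pK pinvK] _] := p_ham.
elim/int_shift_ind: k j => [j|k].
  by rewrite mulr0z addr0 => /(can_inj pK) ->.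
split=> IH j pj.
- rewrite (step_coset1 (i := pinv (p j - (b - a)))) ?pinvK ?subrK //.
  by apply: IH; rewrite pinvK pj mulrzDr mulr1z addrA addrK.
- rewrite -(step_coset1 (i := j) (j := pinv (p j + (b - a)))) ?pinvK //.
  by apply: IH; rewrite pinvK pj mulrzDr mulr1z -addrA.
Qed.
End CayleyHamPath.

Section ZZmHamPath.
Variables (m : nat) (p : int -> ZZm m).
Hypotheses (m_gt1 : (1 < m)%N) (p_ham : two_way_ham_path (e1 m) (e2 m) p).

Definition coord_sum (v : ZZm m) : 'Z_m := v.1%:~R + v.2.

Lemma coord_sumD v w : coord_sum (v + w) = coord_sum v + coord_sum w.
Proof. by rewrite /coord_sum /= intrD addrACA. Qed.

Lemma eq_coord_sum_coset v w :
  coord_sum v = coord_sum w -> w = v + (e2 m - e1 m) *~ (v.1 - w.1).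
Proof.
case: v w => [x y] [x' y']; rewrite /coord_sum /= => E.
congr pair; rewrite [in RHS]raddfMz /= ?subr0.
- by rewrite mulrzz; lia.
- by rewrite intrB addrA [y + _]addrC E addrAC subrr add0r.
Qed.

Lemma coord_sum_pathS i : coord_sum (p (i + 1)) = coord_sum (p i) + 1.
Proof.
rewrite stepK coord_sumD.
by case: (step_cases p_ham i) => ->; rewrite /coord_sum /= ?addr0 ?add0r.
Qed.

Lemma coord_sum_pathD i k : coord_sum (p (i + k)) = coord_sum (p i) + k%:~R.
Proof.
elim/int_shift_ind: k => [|k]; first by rewrite !addr0.
by rewrite addrA coord_sum_pathS intrD addrA; split=> [->|/addIr].
Qed.

Lemma step_coord_sum i j : coord_sum (p i) = coord_sum (p j) -> step p i = step p j.
Proof. by move/eq_coord_sum_coset/(step_coset p_ham) ->. Qed.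

Lemma fst_pathS i : (p (i + 1)).1 = (p i).1 + (step p i).1.
Proof. by rewrite stepK. Qed.

Lemma fst_path_mono : {homo (fun i => (p i).1) : i j / i <= j}.
Proof.
apply: homo_lez => i; rewrite fst_pathS.
by case: (step_cases p_ham i) => ->; rewrite /= ?addr0 ?lerDl.
Qed.

Lemma exists_e1_step : exists i, step p i = e1 m.
Proof.
apply: NNPP => no_e1.
have fst_const i : (p i).1 = (p 0).1.
  elim/int_shift_ind: i => // i; rewrite fst_pathS.
  case: (step_cases p_ham i) => [e1i | ->]; last by rewrite addr0.
  by case: no_e1; exists i.
have [[pinv _ pinvK] _] := p_ham.
by have := fst_const (pinv ((p 0).1 + 1, 0)); rewrite pinvK /=; lia.
Qed.

Lemma e1_steps_coord_sum i j :
  step p i = e1 m -> step p j = e1 m -> coord_sum (p i) = coord_sum (p j).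
Proof.
move=> e1i e1j; have [//|neq_ij] := eqVneq (coord_sum (p i)) (coord_sum (p j)); exfalso.
pose r := val (coord_sum (p j) - coord_sum (p i)).
have r_lt_m : (r < m)%N by rewrite -[m in (_ < m)%N](Zp_cast m_gt1) ltn_ord.
have r_gt0 : (0 < r)%N.
  rewrite lt0n; apply: contra neq_ij => /eqP r0.
  by rewrite eq_sym -subr_eq0; apply/eqP/val_inj.
have e1ir : step p (i + r) = e1 m.
  rewrite -e1j; apply: step_coord_sum.
  by rewrite coord_sum_pathD -pmulrn natr_Zp addrC subrK.
have fst_gap : (p i).1 + 2 <= (p (i + m)).1.
  have := fst_path_mono (_ : i + 1 <= i + r).
  have := fst_path_mono (_ : i + r + 1 <= i + m).
  rewrite !fst_pathS e1i e1ir /=; lia.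
have [[pinv _ pinvK] _] := p_ham.
pose l := pinv (p i - (e2 m - e1 m)).
have fst_l : (p l).1 = (p i).1 + 1 by rewrite pinvK /=; lia.
have sum_l : coord_sum (p l) = coord_sum (p i).
  by rewrite pinvK coord_sumD /coord_sum /= subr0 sub0r opprK subrr addr0.
have l_near_i : i < l < i + m.
  by rewrite !ltNge; apply/andP; split; apply/negP => /fst_path_mono; lia.
have [s ls] : exists s : nat, l = i + s.
  by exists `|l - i|%N; rewrite gez0_abs ?subrKC //; lia.
move: sum_l; rewrite ls coord_sum_pathD -pmulrn -{2}[coord_sum (p i)]addr0 => /addrI s0.
by have := val_Zp_nat m_gt1 s; rewrite s0 modn_small /=; lia.
Qed.

Lemma ZZm_step_shape :
  exists alpha, forall i, step p i = if coord_sum (p i) == alpha then e1 m else e2 m.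
Proof.
have [i0 e1i0] := exists_e1_step.
exists (coord_sum (p i0)) => i; case: eqP => [/step_coord_sum -> // | neq].
by case: (step_cases p_ham i) => // e1i; case: neq; apply: e1_steps_coord_sum.
Qed.
End ZZmHamPath.

Lemma ZZm_ham_path_translate m (p q : int -> ZZm m) : (1 < m)%N ->
  two_way_ham_path (e1 m) (e2 m) p -> two_way_ham_path (e1 m) (e2 m) q ->
  translate_equiv p q.
Proof.
move=> m_gt1 p_ham q_ham.
have [alpha p_step] := ZZm_step_shape m_gt1 p_ham.
have [beta q_step] := ZZm_step_shape m_gt1 q_ham.
pose k : int := val ((alpha - coord_sum (p 0)) - (beta - coord_sum (q 0))).
exists k, (q 0 - p k); apply: step_translate => i.
rewrite p_step q_step -[i]add0r -addrA !coord_sum_pathD // intrD -pmulrn natr_Zp.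
rewrite -[_ == beta]subr_eq0 -[_ == alpha]subr_eq0.
by congr (if _ == 0 then _ else _); ring.
Qed.

Lemma divzS_cases (n : int) (d : nat) :
  ((n + 1) %/ d)%Z = (n %/ d)%Z \/ ((n + 1) %/ d)%Z = (n %/ d)%Z + 1.
Proof.
have [->|d_gt0] := posnP d; first by rewrite !divz0; left.
have := divz_eq n d; have := divz_eq (n + 1) d.
have := ltz_pmod n (d_gt0 : 0 < d%:Z); have := ltz_pmod (n + 1) (d_gt0 : 0 < d%:Z).
have := modz_ge0 n (_ : d%:Z != 0); have := modz_ge0 (n + 1) (_ : d%:Z != 0).
move: ((n + 1) %/ d)%Z (n %/ d)%Z ((n + 1) %% d)%Z (n %% d)%Z => q1 q r1 r.
nia.
Qed.

Lemma val_Zp_intr m (n : int) : (1 < m)%N -> (val (n%:~R : 'Z_m))%:Z = (n %% m)%Z.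
Proof.
move=> m_gt1; have m_neq0 : m%:Z != 0 by lia.
have [r r_def] : exists r : nat, (n %% m)%Z = r.
  by exists `|(n %% m)%Z|%N; rewrite gez0_abs // modz_ge0.
rewrite {1}(divz_eq n m) r_def intrD intrM -pmulrn pchar_Zp // mulr0 add0r -pmulrn.
have := val_Zp_nat m_gt1 r; rewrite /= => ->.
by rewrite modn_small //; have := ltz_pmod n (_ : 0 < m%:Z); lia.
Qed.

(* Row-major order of Z x Z_m, sheared by (x, y) |-> (x, y - x) so that leaving a row is
   an e1 step. *)
Definition ZZm_path m (n : int) : ZZm m := ((n %/ m)%Z, n%:~R - ((n %/ m)%Z)%:~R).

Lemma ZZm_path_bij m : (1 < m)%N -> bijective (ZZm_path m).
Proof.
move=> m_gt1; have m_neq0 : m%:Z != 0 by lia.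
exists (fun v : ZZm m => v.1 * m + (val (v.2 + v.1%:~R))%:Z) => [n | [x y]].
  by rewrite subrK val_Zp_intr // -divz_eq.
have val_lt_m : (val (y + x%:~R)%R < m)%N.
  by rewrite -[m in (_ < m)%N](Zp_cast m_gt1) ltn_ord.
rewrite -[(x, y).1]/x -[(x, y).2]/y /ZZm_path divzMDl // divz_small ?addr0; last by lia.
by congr pair; rewrite intrD intrM -!pmulrn pchar_Zp // mulr0 add0r natr_Zp addrK.
Qed.

Lemma ZZm_path_arc m n : cay_arc (e1 m) (e2 m) (ZZm_path m n) (ZZm_path m (n + 1)).
Proof.
rewrite /cay_arc /ZZm_path; case: (divzS_cases n m) => ->; [right|left];
  by congr pair; rewrite /= ?intrD; ring.
Qed.

Theorem mainTheorem15 (m : nat) : (2 <= m)%N ->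
  (exists p : int -> ZZm m, two_way_ham_path (e1 m) (e2 m) p) /\
  (forall p q : int -> ZZm m,
      two_way_ham_path (e1 m) (e2 m) p ->
      two_way_ham_path (e1 m) (e2 m) q ->
      translate_equiv p q).
Proof.
move=> m_gt1; split; last by move=> p q; apply: ZZm_ham_path_translate.
by exists (ZZm_path m); split; [exact: ZZm_path_bij | exact: ZZm_path_arc].
Qed.
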